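(* For all $M,H\in\mathbb N$ and $x\in X$ there is a set $\Lambda\subseteq\mathbb N$ such that (1) $\lim_{N\to\infty}\frac1N\#(\{1,\dots,N\}\cap\Lambda)=1$, and (2) for every $F\in\mathcal C_M(X)$ and every $n\in\Lambda$, the value $F(\hat T^{n+h}x)$ is the same for all $0\le h\le H-1$.
   Context: Fix integers $2\le q_1<q_2<\cdots$ such that $q_{k+1}>q_k^4+3q_k$ for every $k\ge1$. For $k\ge1$ put $q^{(0)}_k=q_{2k}$, $q^{(1)}_k=q_{2k+1}$, $q^{(2)}_k=q^{(0)}_k-1$, $q^{(3)}_k=q^{(1)}_k-1$, and $L^{(i)}_k=\lfloor q^{(i)}_{k+1}/(3q^{(i)}_k)\rfloor$. Let $s^{(i)}_k\in\{-1,0,1\}^{\mathbb N}$ (indices $n\ge1$) be given by $s^{(i)}_k(n)=1$ if $n=jq^{(i)}_k$ with $1\le j\le L^{(i)}_k$, $s^{(i)}_k(n)=-1$ if $n=jq^{(i)}_k$ with $L^{(i)}_k<j\le2L^{(i)}_k$, and $s^{(i)}_k(n)=0$ otherwise. For $w\in\{-1,0,1\}^{\mathbb N}$ and $p\in\mathbb N_0$ let $\sigma^{-p}w$ be defined by $(\sigma^{-p}w)(n)=0$ for $1\le n\le p$ and $(\sigma^{-p}w)(n)=w(n-p)$ for $n>p$. For $l\le m$ write $w|_l^m=(w_l,\dots,w_m)$. Let $R^{(i)}_k=\{(\sigma^{-p}s^{(i)}_k)|_{q^{(i)}_k}^{q^{(i)}_{k+1}-1}:p=0,1,\dots,q^{(i)}_k\}$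 and $P^{(i)}=\{y\in\{-1,0,1\}^{\mathbb N}: y(n)=0\text{ for }1\le n<q^{(i)}_1,\ y|_{q^{(i)}_k}^{q^{(i)}_{k+1}-1}\in R^{(i)}_k\text{ for all }k\ge1\}$. Let $Z=\{-1,0,1\}^{\mathbb N}\times\{-1,0,1\}^{\mathbb Z}$, where each factor carries the metric $d(u,v)=3^{-\min\{|m|:u_m\neq v_m\}}$ and $Z$ the maximum of the two. $\sigma$ is the left shift $(\sigma u)_m=u_{m+1}$ (invertible on $\{-1,0,1\}^{\mathbb Z}$). Define $T:Z\to Z$, $T(y,z)=(\sigma y,\sigma^{y_1}z)$, and $X_i=\overline{\bigcup_{n\ge0}T^n(P^{(i)}\times\{-1,0,1\}^{\mathbb Z})}$ for $i\in\{0,1,2,3\}$. Let $X=X_0\times X_1\times X_2\times X_3\times\{0,1,2,3\}$ with $\hat T(p^{(0)},p^{(1)},p^{(2)},p^{(3)},i)=(Tp^{(0)},Tp^{(1)},Tp^{(2)},Tp^{(3)},i)$. For $p=(y,z)\in Z$ and $M\in\mathbb N$, $[p]_M=((y_1,\dots,y_M),(z_{-M},\dots,z_M))$. Writing points of $X$ as $(x^{(0)},x^{(1)},x^{(2)},x^{(3)},i)$, $\mathcal C_M(X)$ denotes the set of functions $F:X\to\mathbb C$ whose value depends only on $([x^{(\ell)}]_M)_{0\le\ell\le3}$ and $i$. *)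

From Stdlib Require Import Reals ZArith Arith List Lia Bool.
From Coquelicot Require Import Coquelicot.
Local Open Scope nat_scope.

(* ---------- Points of Z = {-1,0,1}^N x {-1,0,1}^Z ----------
   A one-sided sequence y = (y_1, y_2, ...) is encoded as y : nat -> Z,
   with coordinate n stored at index n (n >= 1); index 0 is unused and
   normalised to 0 for points of Z. *)
Definition pt := ((nat -> Z) * (Z -> Z))%type.

Definition trit (a : Z) : Prop := (a = -1 \/ a = 0 \/ a = 1)%Z.

Definition inOneSided (y : nat -> Z) : Prop :=
  y 0 = 0%Z /\ forall n, 1 <= n -> trit (y n).
Definition inTwoSided (z : Z -> Z) : Prop := forall m, trit (z m).
Definition inZsp (p : pt) : Prop := inOneSided (fst p) /\ inTwoSided (snd p).

Definition shift1 (y : nat -> Z) : nat -> Z :=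
  fun n => match n with 0 => 0%Z | _ => y (n + 1) end.

Definition T (p : pt) : pt :=
  (shift1 (fst p), fun m => snd p (m + fst p 1%nat)%Z).

(* [p]_M = [p']_M : agreement of y on 1..M and of z on -M..M;
   equivalently d(p,p') < 3^{-M} *)
Definition window_eq (M : nat) (p p' : pt) : Prop :=
  (forall n, 1 <= n <= M -> fst p n = fst p' n) /\
  (forall m : Z, (- Z.of_nat M <= m <= Z.of_nat M)%Z -> snd p m = snd p' m).

Definition qi (q : nat -> nat) (i k : nat) : nat :=
  match i with
  | 0 => q (2 * k)
  | 1 => q (2 * k + 1)
  | 2 => q (2 * k) - 1
  | _ => q (2 * k + 1) - 1
  end.

Definition Lq (q : nat -> nat) (i k : nat) : nat :=
  qi q i (k + 1) / (3 * qi q i k).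

Definition s (q : nat -> nat) (i k : nat) : nat -> Z :=
  fun n =>
    let a := qi q i k in
    let L := Lq q i k in
    if (1 <=? n) && (n mod a =? 0) then
      let j := n / a in
      if (1 <=? j) && (j <=? L) then 1%Z
      else if (L <? j) && (j <=? 2 * L) then (-1)%Z
      else 0%Z
    else 0%Z.

Definition shiftR (p : nat) (w : nat -> Z) : nat -> Z :=
  fun n => if n <=? p then 0%Z else w (n - p).

Definition inR (q : nat -> nat) (i k : nat) (y : nat -> Z) : Prop :=
  exists p, p <= qi q i k /\
    forall n, qi q i k <= n <= qi q i (k + 1) - 1 ->
      y n = shiftR p (s q i k) n.

Definition inP (q : nat -> nat) (i : nat) (y : nat -> Z) : Prop :=
  inOneSided y /\
  (forall n, 1 <= n < qi q i 1 -> y n = 0%Z) /\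
  (forall k, 1 <= k -> inR q i k y).

Definition inOrbit (q : nat -> nat) (i : nat) (p : pt) : Prop :=
  exists n p0, inP q i (fst p0) /\ inTwoSided (snd p0) /\ p = Nat.iter n T p0.

(* X_i = closure in Z of that union *)
Definition inXi (q : nat -> nat) (i : nat) (p : pt) : Prop :=
  inZsp p /\ forall M, exists p', inOrbit q i p' /\ window_eq M p p'.

Definition pt4 := (pt * pt * pt * pt * nat)%type.

Definition inX (q : nat -> nat) (x : pt4) : Prop :=
  match x with (p0, p1, p2, p3, i) =>
    inXi q 0 p0 /\ inXi q 1 p1 /\ inXi q 2 p2 /\ inXi q 3 p3 /\ i < 4
  end.

Definition hatT (x : pt4) : pt4 :=
  match x with (p0, p1, p2, p3, i) => (T p0, T p1, T p2, T p3, i) end.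

Definition CM (q : nat -> nat) (M : nat) (F : pt4 -> C) : Prop :=
  forall x x' : pt4, inX q x -> inX q x' ->
    match x, x' with (p0, p1, p2, p3, i), (p0', p1', p2', p3', i') =>
      window_eq M p0 p0' -> window_eq M p1 p1' -> window_eq M p2 p2' ->
      window_eq M p3 p3' -> i = i' -> F x = F x'
    end.

Definition count_upto (Lam : nat -> bool) (N : nat) : nat :=
  length (filter Lam (seq 1 N)).

Definition good_q (q : nat -> nat) : Prop :=
  2 <= q 1 /\ (forall k, 1 <= k -> q k < q (k + 1)) /\
  (forall k, 1 <= k -> q (k + 1) > q k ^ 4 + 3 * q k).

(* The one-sided coordinate of a point of [X_i] inherits from [P^(i)] a sparse support:
   beyond [q^(i)_k] its nonzero symbols are at least [q^(i)_k] apart, so the support has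
   density zero.  Take for [Lambda] the times [n] after which all four one-sided
   coordinates vanish on [n+1 .. n+M+H]; its complement is a finite union of shifts of
   density-zero sets.  Along such a block [T] only shifts the one-sided coordinate and
   leaves the two-sided one in place (it moves by [y_1 = 0]), so the [M]-windows of
   [hatT^(n+h) x] and [hatT^n x] coincide for [h < H]. *)

From Stdlib Require Import Reals ZArith Arith List Lia Lra Bool.
From Coquelicot Require Import Coquelicot.
Local Open Scope nat_scope.

Definition count_from (f : nat -> bool) (a n : nat) : nat := length (filter f (seq a n)).

Lemma count_from_le f a n : count_from f a n <= n.
Proof.
  unfold count_from. etransitivity; [apply filter_length_le|]. now rewrite length_seq.
Qed.

Lemma count_from_app f a n m :
  count_from f a (n + m) = count_from f a n + count_from f (a + n) m.
Proof. unfold count_from. now rewrite seq_app, filter_app, length_app. Qed.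

Lemma count_from_sub f a b n m :
  a <= b -> b + m <= a + n -> count_from f b m <= count_from f a n.
Proof.
  intros Hab Hbm. replace n with ((b - a) + (m + (a + n - b - m))) by lia.
  rewrite !count_from_app. replace (a + (b - a)) with b by lia. lia.
Qed.

Lemma count_from_orb f g a n :
  count_from (fun t => f t || g t) a n <= count_from f a n + count_from g a n.
Proof.
  unfold count_from. induction (seq a n) as [|t s IH]; simpl; [lia|].
  destruct (f t), (g t); simpl; lia.
Qed.

Lemma count_from_negb f a n : count_from (fun t => negb (f t)) a n + count_from f a n = n.
Proof.
  unfold count_from. rewrite Nat.add_comm, filter_length. apply length_seq.
Qed.

Definition spaced_from (f : nat -> bool) (A : nat) : Prop :=
  forall t t', A <= t -> t < t' -> f t = true -> f t' = true -> A <= t' - t.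

Section Spaced.
Variables (f : nat -> bool) (A : nat).
Hypotheses (HA : 1 <= A) (Hf : spaced_from f A).

Lemma count_spaced_window u W : A <= u -> W <= A -> count_from f u W <= 1.
Proof.
  unfold count_from. revert u. induction W as [|W IH]; intros u Hu HW; simpl; [lia|].
  destruct (f u) eqn:Ef; [|apply IH; lia].
  enough (filter f (seq (S u) W) = nil) as -> by (simpl; lia).
  rewrite (filter_ext_in f (fun _ => false)), filter_false; [reflexivity|].
  intros t Ht. apply in_seq in Ht.
  destruct (f t) eqn:Et; [|reflexivity].
  specialize (Hf u t Hu ltac:(lia) Ef Et). lia.
Qed.

Lemma count_spaced_blocks m u : A <= u -> count_from f u (m * A) <= m.
Proof.
  revert u. induction m as [|m IH]; intros u Hu; [apply count_from_le|].
  cbn [Nat.mul]. rewrite count_from_app.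
  pose proof (count_spaced_window u A Hu (le_n A)).
  specialize (IH (u + A) ltac:(lia)). lia.
Qed.

Lemma count_spaced N : count_from f 1 N <= A + N / A.
Proof.
  pose proof (Nat.div_mod_eq N A). pose proof (Nat.mod_upper_bound N A ltac:(lia)).
  assert (Hcover : count_from f 1 N <= count_from f 1 ((A - 1) + (N / A + 1) * A))
    by (apply count_from_sub; nia).
  rewrite count_from_app in Hcover. replace (1 + (A - 1)) with A in Hcover by lia.
  pose proof (count_spaced_blocks (N / A + 1) A (le_n A)).
  pose proof (count_from_le f 1 (A - 1)). lia.
Qed.

End Spaced.

Definition zero_density (f : nat -> bool) : Prop :=
  is_lim_seq (fun N => (INR (count_from f 1 N) / INR N)%R) 0%R.

(* By [count_spaced], the density of [f] in [1..N] is at most [A / N + 1 / A]. *)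
Lemma zero_density_of_spaced f :
  (forall k, exists A, k <= A /\ spaced_from f A) -> zero_density f.
Proof.
  intros Hsp. apply is_lim_seq_spec. intros eps. pose proof (cond_pos eps) as Heps.
  destruct (INR_archimed eps 2 Heps) as [k Hk].
  destruct (Hsp (S k)) as [A [HkA HA]].
  destruct (INR_archimed eps (2 * INR A) Heps) as [N0 HN0].
  exists (S N0). intros N HN.
  pose proof (count_spaced f A ltac:(lia) HA N) as Hcnt.
  assert (Hmul : A * count_from f 1 N <= A * A + N)
    by (pose proof (Nat.Div0.mul_div_le N A); nia).
  apply le_INR in Hmul. rewrite plus_INR, !mult_INR in Hmul.
  apply le_INR in HkA. apply le_INR in HN. rewrite S_INR in HkA, HN.
  pose proof (pos_INR k). pose proof (pos_INR N0). pose proof (pos_INR (count_from f 1 N)).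
  set (c := INR (count_from f 1 N)) in *. set (Ar := INR A) in *. set (Nr := INR N) in *.
  rewrite Rminus_0_r, Rabs_pos_eq by (apply Rdiv_le_0_compat; lra).
  apply Rlt_div_l; [lra|].
  assert (HAeps : (2 < Ar * eps)%R) by nra.
  assert (HNeps : (2 * Ar < Nr * eps)%R) by nra.
  assert (Ar * c < Ar * (eps * Nr))%R by nra.
  nra.
Qed.

Lemma zero_density_of_le g (u : nat -> R) :
  is_lim_seq u 0%R ->
  (forall N, 1 <= N -> (INR (count_from g 1 N) <= u N * INR N)%R) ->
  zero_density g.
Proof.
  intros Hu Hle.
  apply is_lim_seq_le_le_loc with (u := fun _ => 0%R) (w := u);
    [|apply is_lim_seq_const|exact Hu].
  exists 1. intros N HN.
  assert (HNpos : (0 < INR N)%R) by (apply lt_0_INR; lia).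
  split.
  - apply Rdiv_le_0_compat; [apply pos_INR|exact HNpos].
  - apply Rle_div_l; [exact HNpos|]. now apply Hle.
Qed.

Lemma is_lim_seq_inv_INR : is_lim_seq (fun N => / INR N)%R 0%R.
Proof.
  replace (Finite 0) with (Rbar_inv p_infty) by reflexivity.
  apply is_lim_seq_inv; [apply is_lim_seq_INR|discriminate].
Qed.

Lemma zero_density_orb f g :
  zero_density f -> zero_density g -> zero_density (fun t => f t || g t).
Proof.
  intros Hf Hg.
  apply zero_density_of_le
    with (u := fun N => (INR (count_from f 1 N) / INR N + INR (count_from g 1 N) / INR N)%R).
  - replace 0%R with (0 + 0)%R by ring. now apply is_lim_seq_plus'.
  - intros N HN.
    assert (INR N <> 0%R) by (apply not_0_INR; lia).
    pose proof (count_from_orb f g 1 N) as Hcnt. apply le_INR in Hcnt. rewrite plus_INR in Hcnt.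
    replace ((INR (count_from f 1 N) / INR N + INR (count_from g 1 N) / INR N) * INR N)%R
      with (INR (count_from f 1 N) + INR (count_from g 1 N))%R by (field; assumption).
    exact Hcnt.
Qed.

Lemma existsb_false_In {A} (f : A -> bool) l x :
  existsb f l = false -> In x l -> f x = false.
Proof.
  intros Hnone Hx. destruct (f x) eqn:Efx; [|reflexivity].
  rewrite <- Hnone. symmetry. apply existsb_exists. now exists x.
Qed.

Lemma count_from_shift f d a N :
  count_from (fun t => f (t + d)) a N = count_from f (a + d) N.
Proof.
  unfold count_from. revert a. induction N as [|N IH]; intros a; simpl; [reflexivity|].
  destruct (f (a + d)); simpl; rewrite IH; reflexivity.
Qed.

Lemma count_from_existsb_shift f ds D N :
  (forall d, In d ds -> d <= D) ->
  count_from (fun t => existsb (fun d => f (t + d)) ds) 1 N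
    <= length ds * (count_from f 1 N + D).
Proof.
  induction ds as [|d ds IH]; intros HD.
  - unfold count_from. simpl. rewrite filter_false. simpl. lia.
  - cbn [existsb length].
    pose proof (count_from_orb (fun t => f (t + d))
                  (fun t => existsb (fun d => f (t + d)) ds) 1 N) as Horb.
    specialize (IH ltac:(intros; apply HD; simpl; auto)).
    assert (count_from (fun t => f (t + d)) 1 N <= count_from f 1 N + D).
    { rewrite count_from_shift.
      pose proof (HD d (or_introl eq_refl)).
      pose proof (count_from_sub f 1 (1 + d) (N + d) N ltac:(lia) ltac:(lia)) as Hsub.
      rewrite count_from_app in Hsub. pose proof (count_from_le f (1 + N) d). lia. }
    lia.
Qed.

Lemma zero_density_existsb_shift f D :
  zero_density f -> zero_density (fun t => existsb (fun d => f (t + d)) (seq 1 D)).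
Proof.
  intros Hf.
  apply zero_density_of_le
    with (u := fun N => (INR D * (INR (count_from f 1 N) / INR N) + INR D * INR D * / INR N)%R).
  - replace 0%R with (INR D * 0 + INR D * INR D * 0)%R by ring.
    apply is_lim_seq_plus'; apply (is_lim_seq_scal_l _ _ (Finite 0));
      [exact Hf|exact is_lim_seq_inv_INR].
  - intros N HN.
    assert (INR N <> 0%R) by (apply not_0_INR; lia).
    pose proof (count_from_existsb_shift f (seq 1 D) D N) as Hcnt.
    rewrite length_seq in Hcnt.
    specialize (Hcnt ltac:(intros d Hd; apply in_seq in Hd; lia)).
    apply le_INR in Hcnt. rewrite mult_INR, plus_INR in Hcnt.
    replace ((INR D * (INR (count_from f 1 N) / INR N) + INR D * INR D * / INR N) * INR N)%R
      with (INR D * (INR (count_from f 1 N) + INR D))%R by (field; assumption).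
    exact Hcnt.
Qed.

Lemma count_upto_compl_density_one f :
  zero_density f ->
  is_lim_seq (fun N => INR (count_upto (fun n => (1 <=? n) && negb (f n)) N) / INR N)%R 1%R.
Proof.
  intros Hf.
  apply is_lim_seq_ext_loc with (u := fun N => (1 - INR (count_from f 1 N) / INR N)%R).
  - exists 1. intros N HN.
    assert (Hsplit : count_upto (fun n => (1 <=? n) && negb (f n)) N + count_from f 1 N = N).
    { unfold count_upto.
      rewrite (filter_ext_in _ (fun n => negb (f n))); [apply count_from_negb|].
      intros n Hn. apply in_seq in Hn. destruct n as [|n]; [lia|reflexivity]. }
    apply (f_equal INR) in Hsplit. rewrite plus_INR in Hsplit.
    assert (INR N <> 0%R) by (apply not_0_INR; lia).
    replace (INR (count_upto _ N)) with (INR N - INR (count_from f 1 N))%R by lra.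
    field. assumption.
  - rewrite <- Rminus_0_r at 1.
    apply is_lim_seq_minus'; [apply is_lim_seq_const|exact Hf].
Qed.

Lemma good_q_ge_succ q : good_q q -> forall k, 1 <= k -> k + 1 <= q k.
Proof.
  intros [hq1 [hq_incr _]] k Hk.
  induction k as [|k IH]; [lia|].
  destruct k as [|k]; [lia|].
  specialize (hq_incr (S k) ltac:(lia)). rewrite Nat.add_1_r in hq_incr.
  specialize (IH ltac:(lia)). lia.
Qed.

Lemma good_q_ratio q : good_q q -> forall k, 1 <= k -> 11 * q k <= q (S k).
Proof.
  intros hq k Hk.
  pose proof (good_q_ge_succ q hq k Hk) as Hqk.
  destruct hq as [_ [_ hq_fast]]. specialize (hq_fast k Hk).
  rewrite Nat.add_1_r in hq_fast.
  assert (q k ^ 4 = q k * (q k * (q k * q k))) by (simpl; ring).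
  assert (q k * q k >= 2 * q k) by nia.
  assert (q k * (q k * q k) >= 4 * q k) by nia.
  assert (q k * (q k * (q k * q k)) >= 8 * q k) by nia.
  lia.
Qed.

Lemma qi_ge q (hq : good_q q) i j : 1 <= j -> 1 <= qi q i j /\ j <= qi q i j.
Proof.
  intros Hj.
  pose proof (good_q_ge_succ q hq (2 * j) ltac:(lia)).
  pose proof (good_q_ge_succ q hq (S (2 * j)) ltac:(lia)).
  unfold qi. replace (2 * j + 1) with (S (2 * j)) by lia.
  destruct i as [|[|[|i]]]; lia.
Qed.

Lemma qi_ratio q (hq : good_q q) i j : 1 <= j -> 6 * qi q i j <= qi q i (j + 1).
Proof.
  intros Hj.
  pose proof (good_q_ge_succ q hq (2 * j) ltac:(lia)).
  pose proof (good_q_ratio q hq (2 * j) ltac:(lia)).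
  pose proof (good_q_ratio q hq (S (2 * j)) ltac:(lia)).
  pose proof (good_q_ratio q hq (S (S (2 * j))) ltac:(lia)).
  unfold qi.
  replace (2 * (j + 1)) with (S (S (2 * j))) by lia.
  replace (S (S (2 * j)) + 1) with (S (S (S (2 * j)))) by lia.
  replace (2 * j + 1) with (S (2 * j)) by lia.
  destruct i as [|[|[|i]]]; lia.
Qed.

Section IncreasingSequence.
Variable a : nat -> nat.
Hypothesis a_incr : forall j, 1 <= j -> a j < a (j + 1).

Lemma incr_lt j1 j2 : 1 <= j1 -> j1 < j2 -> a j1 < a j2.
Proof.
  intros H1 H12. induction j2 as [|j2 IH]; [lia|].
  pose proof (a_incr j2 ltac:(lia)) as Hstep. rewrite Nat.add_1_r in Hstep.
  destruct (Nat.eq_dec j1 j2) as [->|]; [exact Hstep|].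
  specialize (IH ltac:(lia)). lia.
Qed.

Lemma incr_le j1 j2 : 1 <= j1 -> j1 <= j2 -> a j1 <= a j2.
Proof.
  intros H1 H12. destruct (Nat.eq_dec j1 j2) as [->|]; [lia|].
  pose proof (incr_lt j1 j2 H1 ltac:(lia)). lia.
Qed.

Lemma incr_bracket n : a 1 <= n -> exists j, 1 <= j /\ a j <= n < a (j + 1).
Proof.
  intros Hn.
  assert (Hsearch : forall m, n < a (S m) -> exists j, 1 <= j /\ a j <= n < a (j + 1)).
  { induction m as [|m IH]; intros Hm; [lia|].
    destruct (Nat.lt_ge_cases n (a (S m))); [now apply IH|].
    exists (S m). rewrite Nat.add_1_r. lia. }
  apply (Hsearch (S n)).
  assert (Hgrow : forall m, a 1 + m <= a (S m)).
  { induction m as [|m IH]; [lia|].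
    pose proof (a_incr (S m) ltac:(lia)) as Hstep. rewrite Nat.add_1_r in Hstep. lia. }
  specialize (Hgrow (S n)). lia.
Qed.

End IncreasingSequence.

Definition support (y : nat -> Z) (t : nat) : bool := negb (Z.eqb (y t) 0).

Lemma inR_support_shape q i j w :
  inR q i j w -> exists p, p <= qi q i j /\
    forall n, qi q i j <= n <= qi q i (j + 1) - 1 -> support w n = true ->
      exists c, n = p + c * qi q i j /\ 1 <= c /\ 3 * (c * qi q i j) <= 2 * qi q i (j + 1).
Proof.
  intros [p [Hp Hw]]. exists p. split; [exact Hp|]. intros n Hn Hnz.
  unfold support in Hnz. rewrite (Hw n Hn) in Hnz. unfold shiftR in Hnz.
  destruct (n <=? p) eqn:Enp; [discriminate|]. apply Nat.leb_gt in Enp.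
  unfold s, Lq in Hnz. cbv zeta in Hnz.
  set (A := qi q i j) in *. set (A' := qi q i (j + 1)) in *.
  set (L := A' / (3 * A)) in *. set (c := (n - p) / A) in *.
  destruct ((1 <=? n - p) && ((n - p) mod A =? 0)) eqn:Ediv; [|discriminate].
  apply andb_prop in Ediv as [_ Emod]. apply Nat.eqb_eq in Emod.
  assert (Hc : 1 <= c <= 2 * L).
  { destruct ((1 <=? c) && (c <=? L)) eqn:E1.
    - apply andb_prop in E1 as [E1 E2]. apply Nat.leb_le in E1, E2. lia.
    - destruct ((L <? c) && (c <=? 2 * L)) eqn:E2; [|discriminate].
      apply andb_prop in E2 as [E2 E3]. apply Nat.ltb_lt in E2. apply Nat.leb_le in E3. lia. }
  pose proof (Nat.div_mod_eq (n - p) A) as Hdiv. rewrite Emod in Hdiv. fold c in Hdiv.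
  pose proof (Nat.Div0.mul_div_le A' (3 * A)) as HL. fold L in HL.
  exists c. nia.
Qed.

Lemma qi_incr q (hq : good_q q) i j : 1 <= j -> qi q i j < qi q i (j + 1).
Proof.
  intros Hj. pose proof (qi_ratio q hq i j Hj). pose proof (qi_ge q hq i j Hj). lia.
Qed.

(* Within one level [q_j <= t < q_(j+1)] the support is an arithmetic progression of
   step [q_j] ending before [2 q_(j+1) / 3]; the factor 6 between consecutive levels
   separates the last point of one level from the first point of the next. *)
Lemma inP_support_spaced q (hq : good_q q) i w k :
  inP q i w -> 1 <= k -> spaced_from (support w) (qi q i k).
Proof.
  intros [_ [_ HR]] Hk t t' Ht Htt' Hw Hw'.
  pose proof (qi_incr q hq i) as Hincr.
  assert (Hk1 : qi q i 1 <= qi q i k) by (apply (incr_le _ Hincr); lia).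
  destruct (incr_bracket _ Hincr t ltac:(lia)) as [j [Hj Htj]].
  destruct (incr_bracket _ Hincr t' ltac:(lia)) as [j' [Hj' Htj']].
  assert (Hkj : k <= j).
  { destruct (Nat.le_gt_cases k j) as [|Hjk]; [assumption|].
    pose proof (incr_le _ Hincr (j + 1) k ltac:(lia) ltac:(lia)). lia. }
  assert (qi q i k <= qi q i j) by (apply (incr_le _ Hincr); lia).
  destruct (inR_support_shape q i j w (HR j Hj)) as [p [Hp Hshape]].
  destruct (Hshape t ltac:(lia) Hw) as [c [Ec [Hc1 Hc2]]].
  destruct (lt_eq_lt_dec j j') as [[Hlt|<-]|Hgt].
  - pose proof (incr_le _ Hincr (j + 1) j' ltac:(lia) ltac:(lia)).
    pose proof (qi_ratio q hq i j Hj). nia.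
  - destruct (Hshape t' ltac:(lia) Hw') as [c' [Ec' _]].
    assert (c < c') by nia. nia.
  - pose proof (incr_le _ Hincr (j' + 1) j ltac:(lia) ltac:(lia)). lia.
Qed.

Lemma T_iter_fst p n t : 1 <= t -> fst (Nat.iter n T p) t = fst p (t + n).
Proof.
  revert t. induction n as [|n IH]; intros t Ht.
  - simpl. now rewrite Nat.add_0_r.
  - simpl Nat.iter. unfold T at 1. simpl fst. unfold shift1.
    destruct t as [|t]; [lia|]. rewrite IH by lia. f_equal. lia.
Qed.

Lemma inXi_support_spaced q (hq : good_q q) i p k :
  inXi q i p -> 1 <= k -> spaced_from (support (fst p)) (qi q i k).
Proof.
  intros [_ Happrox] Hk t t' Ht Htt' Hw Hw'.
  destruct (Happrox t') as [p' [[m [p0 [HP [_ ->]]]] [Hwin _]]].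
  pose proof (qi_ge q hq i k Hk).
  unfold support in Hw, Hw'.
  rewrite (Hwin t ltac:(lia)), T_iter_fst in Hw by lia.
  rewrite (Hwin t' ltac:(lia)), T_iter_fst in Hw' by lia.
  pose proof (inP_support_spaced q hq i (fst p0) k HP Hk (t + m) (t' + m)
                ltac:(lia) ltac:(lia) Hw Hw').
  lia.
Qed.

Lemma inXi_support_zero_density q (hq : good_q q) i p :
  inXi q i p -> zero_density (support (fst p)).
Proof.
  intros HX. apply zero_density_of_spaced. intros k.
  exists (qi q i (S k)). split.
  - pose proof (qi_ge q hq i (S k) ltac:(lia)). lia.
  - apply (inXi_support_spaced q hq); [exact HX|lia].
Qed.

Lemma inXi_T q i p : inXi q i p -> inXi q i (T p).
Proof.
  intros [[[Hy0 Hy] Hz] Happrox]. split.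
  - split; [split; [reflexivity|]|].
    + intros n Hn. destruct n as [|n]; [lia|]. apply Hy. lia.
    + intros m. apply Hz.
  - intros M. destruct (Happrox (S M)) as [p' [[m [p0 [HP [HZ ->]]]] [Hwin1 Hwin2]]].
    exists (T (Nat.iter m T p0)). split.
    + exists (S m), p0. auto.
    + split.
      * intros n Hn. destruct n as [|n]; [lia|]. apply Hwin1. lia.
      * intros m0 Hm0. cbn.
        pose proof (Hy 1 ltac:(lia)) as Htrit. rewrite (Hwin1 1 ltac:(lia)) in Htrit |- *.
        apply Hwin2. unfold trit in Htrit. lia.
Qed.

Lemma inXi_iter q i p n : inXi q i p -> inXi q i (Nat.iter n T p).
Proof. intros HX. induction n as [|n IH]; [exact HX|]. now apply inXi_T. Qed.

Lemma hatT_iter n p0 p1 p2 p3 (i : nat) :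
  Nat.iter n hatT (p0, p1, p2, p3, i) =
  (Nat.iter n T p0, Nat.iter n T p1, Nat.iter n T p2, Nat.iter n T p3, i).
Proof. induction n as [|n IH]; [reflexivity|]. simpl. now rewrite IH. Qed.

Lemma T_iter_snd_frozen p n h :
  (forall d, 1 <= d <= h -> fst p (n + d) = 0%Z) ->
  forall m, snd (Nat.iter (n + h) T p) m = snd (Nat.iter n T p) m.
Proof.
  induction h as [|h IH]; intros Hzero m; [now rewrite Nat.add_0_r|].
  rewrite Nat.add_succ_r. simpl Nat.iter. unfold T at 1. simpl snd.
  rewrite T_iter_fst, Nat.add_1_l, <- Nat.add_succ_r, Hzero by lia.
  rewrite Z.add_0_r. apply IH. intros d Hd. apply Hzero. lia.
Qed.

Lemma T_iter_window_eq p n M D h :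
  M + h <= D -> (forall d, 1 <= d <= D -> fst p (n + d) = 0%Z) ->
  window_eq M (Nat.iter (n + h) T p) (Nat.iter n T p).
Proof.
  intros HD Hzero. split.
  - intros t Ht. rewrite !T_iter_fst by lia.
    replace (t + (n + h)) with (n + (t + h)) by lia. rewrite (Nat.add_comm t n).
    rewrite !Hzero by lia. reflexivity.
  - intros m _. apply T_iter_snd_frozen. intros d Hd. apply Hzero. lia.
Qed.

Theorem mainTheorem12 (q : nat -> nat) (hq : good_q q) (M H : nat)
  (hM : 1 <= M) (hH : 1 <= H) (x : pt4) (hx : inX q x) :
  exists Lam : nat -> bool,
    (forall n, Lam n = true -> 1 <= n) /\
    is_lim_seq (fun N => (INR (count_upto Lam N) / INR N)%R) 1%R /\
    (forall F : pt4 -> C, CM q M F ->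
       forall n, Lam n = true ->
         forall h, h <= H - 1 ->
           F (Nat.iter (n + h) hatT x) = F (Nat.iter n hatT x)).
Proof.
  destruct x as [[[[p0 p1] p2] p3] i].
  destruct hx as [X0 [X1 [X2 [X3 Hi]]]].
  set (active := fun t => support (fst p0) t ||
                  (support (fst p1) t || (support (fst p2) t || support (fst p3) t))).
  set (bad := fun n => existsb (fun d => active (n + d)) (seq 1 (M + H))).
  exists (fun n => (1 <=? n) && negb (bad n)). split; [|split].
  - intros n Hn. apply andb_prop in Hn as [Hn _]. now apply Nat.leb_le.
  - apply count_upto_compl_density_one, zero_density_existsb_shift.
    repeat apply zero_density_orb; eapply inXi_support_zero_density; eassumption.
  - intros F HF n Hn h Hh.
    assert (Hquiet : forall d, 1 <= d <= M + H ->
      fst p0 (n + d) = 0%Z /\ fst p1 (n + d) = 0%Z /\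
      fst p2 (n + d) = 0%Z /\ fst p3 (n + d) = 0%Z).
    { intros d Hd. apply andb_prop in Hn as [_ Hn]. apply negb_true_iff in Hn.
      pose proof (existsb_false_In _ _ d Hn ltac:(apply in_seq; lia)) as Hd_quiet.
      unfold active, support in Hd_quiet.
      now rewrite !orb_false_iff, !negb_false_iff, !Z.eqb_eq in Hd_quiet. }
    assert (HinX : forall m, inX q (Nat.iter m hatT (p0, p1, p2, p3, i))).
    { intros m. rewrite hatT_iter. cbn [inX].
      split; [|split; [|split; [|split]]]; auto using inXi_iter. }
    specialize (HF _ _ (HinX (n + h)) (HinX n)). rewrite !hatT_iter in HF |- *.
    apply HF; try reflexivity; apply (T_iter_window_eq _ _ _ (M + H)); try lia;
      intros d Hd; apply Hquiet, Hd.
Qed.
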